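(* Let $H$ be a complex Hilbert space and let $T$ be a densely defined closed operator in $H$ with $D(T)\subset D(T^* )$, and write $T=A+iB$ where $A=\frac{T+T^*}{2}$ and $B=\frac{T-T^*}{2i}$ (both defined on $D(T)$). Assume that $A$ is positive or $B$ is positive. If $T$ is nilpotent, i.e. there is $n\in\mathbb{N}$ such that $T^n$ is well defined with $D(T^n)=D(T)$ and $T^nx=0$ for all $x\in D(T)$, then $T\in B(H)$, $T$ is normal, and $T=0$ everywhere on $H$.
   Context: Products of unbounded operators are taken on natural domains: $D(ST)=\{x\in D(T): Tx\in D(S)\}$; sums on $D(S+T)=D(S)\cap D(T)$. A symmetric operator $S$ (densely defined with $S\subset S^*$) is positive if $\langle Sx,x\rangle\geq 0$ for all $x\in D(S)$. $B(H)$ is the algebra of everywhere defined bounded operators on $H$. *)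

(* A complex Hilbert space is an lmodType over R[i]
   with an inner product (linear in the first argument) complete for the
   induced norm. *)
From HB Require Import structures.
From mathcomp Require Import all_boot all_order all_algebra.
From mathcomp Require Import complex.
From mathcomp Require Import reals.
From Stdlib Require Import ClassicalEpsilon.

Set Implicit Arguments.
Unset Strict Implicit.
Unset Printing Implicit Defensive.

Import Order.TTheory GRing.Theory Num.Theory.
Local Open Scope ring_scope.

Section Hilbert.
Variable R : realType.
Variable V : lmodType R[i].
Variable ip : V -> V -> R[i].

(* inner product axioms: linear in the first variable, conjugate symmetric,
   positive definite (0 <= z in R[i] means z is a nonnegative real) *)
Definition is_inner_product : Prop :=
  [/\ (forall (a : R[i]) (x y z : V), ip (a *: x + y) z = a * ip x z + ip y z),
      (forall x y : V, ip y x = Num.conj (ip x y)),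
      (forall x : V, 0 <= ip x x) &
      (forall x : V, ip x x = 0 -> x = 0)].

Definition hnorm (x : V) : R := Num.sqrt (complex.Re (ip x x)).

Definition hcauchy (u : nat -> V) : Prop :=
  forall e : R, 0 < e -> exists N : nat, forall m n : nat,
    (N <= m)%N -> (N <= n)%N -> hnorm (u m - u n) < e.

Definition hconverges (u : nat -> V) (l : V) : Prop :=
  forall e : R, 0 < e -> exists N : nat, forall n : nat,
    (N <= n)%N -> hnorm (u n - l) < e.

Definition hcomplete : Prop :=
  forall u : nat -> V, hcauchy u -> exists l : V, hconverges u l.

Definition is_hilbert : Prop := is_inner_product /\ hcomplete.

Record op := Op { dom : V -> Prop; app : V -> V }.

Definition is_linear_op (T : op) : Prop :=
  [/\ dom T 0,
      (forall (a : R[i]) x y, dom T x -> dom T y -> dom T (a *: x + y)) &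
      (forall (a : R[i]) x y, dom T x -> dom T y ->
          app T (a *: x + y) = a *: app T x + app T y)].

Definition densely_defined (T : op) : Prop :=
  forall (x : V) (e : R), 0 < e -> exists y : V, dom T y /\ hnorm (x - y) < e.

Definition closed_op (T : op) : Prop :=
  forall (u : nat -> V) (x y : V), (forall n, dom T (u n)) ->
    hconverges u x -> hconverges (fun n => app T (u n)) y ->
    dom T x /\ app T x = y.

(* adjoint: D(T* ) = {y | exists z, forall x in D(T), <Tx,y> = <x,z>},
   T* y = that z (unique when T is densely defined; chosen by epsilon) *)
Definition adj_rel (T : op) (y z : V) : Prop :=
  forall x, dom T x -> ip (app T x) y = ip x z.

Definition adjoint (T : op) : op :=
  Op (fun y => exists z, adj_rel T y z)
     (fun y => epsilon (inhabits 0) (adj_rel T y)).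

Definition opcomp (S T : op) : op :=
  Op (fun x => dom T x /\ dom S (app T x)) (fun x => app S (app T x)).

Definition opadd (S T : op) : op :=
  Op (fun x => dom S x /\ dom T x) (fun x => app S x + app T x).

Definition opscale (a : R[i]) (T : op) : op :=
  Op (dom T) (fun x => a *: app T x).

Definition opid : op := Op (fun _ => True) (fun x => x).

Fixpoint oppow (T : op) (n : nat) : op :=
  match n with 0 => opid | n.+1 => opcomp T (oppow T n) end.

Definition op_eq (S T : op) : Prop :=
  (forall x, dom S x <-> dom T x) /\ (forall x, dom S x -> app S x = app T x).

Definition op_sub (S T : op) : Prop :=
  (forall x, dom S x -> dom T x) /\ (forall x, dom S x -> app S x = app T x).

Definition re_part (T : op) : op :=
  opscale (2%:R)^-1 (opadd T (adjoint T)).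
Definition im_part (T : op) : op :=
  opscale (2%:R * 'i%C)^-1 (opadd T (opscale (-1) (adjoint T))).

Definition symmetric_op (S : op) : Prop :=
  densely_defined S /\ op_sub S (adjoint S).
Definition positive_op (S : op) : Prop :=
  symmetric_op S /\ forall x, dom S x -> 0 <= ip (app S x) x.

Definition in_BH (T : op) : Prop :=
  (forall x, dom T x) /\
  exists M : R, forall x, hnorm (app T x) <= M * hnorm x.

Definition normal_op (T : op) : Prop :=
  op_eq (opcomp T (adjoint T)) (opcomp (adjoint T) T).

End Hilbert.

(* If Re T or Im T is positive, the values c <Tw, w> (c = 1, resp. c = -i)
   lie in the half-plane Re >= 0.  For x with T^2 x = 0 and w = a x + b Tx one
   gets <Tw, w> = |a|^2 <Tx, x> + a b^* ||Tx||^2, and a suitable choice of a, b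
   makes Re (c <Tw, w>) = -||Tx||^4; hence ker T^2 = ker T on D(T).  Walking
   down the powers of a nilpotent T then gives T = 0 on D(T).  As T is closed
   and densely defined, D(T) is the whole space; so T = 0 is bounded, T^* = 0,
   and T is normal. *)
From HB Require Import structures.
From mathcomp Require Import all_boot all_order all_algebra.
From mathcomp Require Import complex.
From mathcomp Require Import reals.
From Stdlib Require Import ClassicalEpsilon.
From mathcomp Require Import ring.

Set Implicit Arguments.
Unset Strict Implicit.
Unset Printing Implicit Defensive.

Import Order.TTheory GRing.Theory Num.Theory.
Local Open Scope ring_scope.

Section LinearOperator.
Variables (R : realType) (V : lmodType R[i]) (T : op V).
Hypothesis Tlin : is_linear_op T.

Lemma app_op0 : app T 0 = 0.
Proof.
case: Tlin => dom0 _ appD; have := appD (-1) 0 0 dom0 dom0.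
by rewrite scaler0 addr0 scaleN1r addNr.
Qed.

Lemma linear_op_comb (a b : R[i]) x y : dom T x -> dom T y ->
  dom T (a *: x + b *: y) /\ app T (a *: x + b *: y) = a *: app T x + b *: app T y.
Proof.
have T0 := app_op0; case: Tlin => dom0 domD appD Dx Dy.
have Dby : dom T (b *: y) by rewrite -[_ *: y]addr0; exact: domD.
split; first exact: domD.
by rewrite appD // -[b *: y]addr0 appD // T0 addr0.
Qed.

Definition is_zero_op : Prop := forall x, dom T x /\ app T x = 0.

Definition pow_vanishes (n : nat) : Prop :=
  forall x, dom T x -> dom (oppow T n) x /\ app (oppow T n) x = 0.

Definition sq_ker_sub_ker : Prop :=
  forall y, dom T y -> dom T (app T y) -> app T (app T y) = 0 -> app T y = 0.

Lemma pow_vanishes_pred n :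
  sq_ker_sub_ker -> pow_vanishes n.+2 -> pow_vanishes n.+1.
Proof.
move=> sq0 vanish x Dx; have [[[Dnx Dy] DTy] TTy0] := vanish x Dx.
by split; [split | exact: sq0].
Qed.

Lemma pow_vanishes_eq0 n :
  sq_ker_sub_ker -> pow_vanishes n -> forall x, dom T x -> app T x = 0.
Proof.
move=> sq0; case: n => [vanish x Dx|n].
  by have /= -> := (vanish x Dx).2; exact: app_op0.
elim: n => [vanish x Dx|n IHn vanish]; first exact: (vanish x Dx).2.
exact/IHn/pow_vanishes_pred.
Qed.

End LinearOperator.

Section InnerProduct.
Variables (R : realType) (V : lmodType R[i]) (ip : V -> V -> R[i]).
Hypothesis ipP : is_inner_product ip.

Lemma ipDl x y z : ip (x + y) z = ip x z + ip y z.
Proof. by case: ipP => lin _ _ _; have := lin 1 x y z; rewrite scale1r mul1r. Qed.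

Lemma ip0l z : ip 0 z = 0.
Proof. by apply/(addrI (ip 0 z)); rewrite -ipDl !addr0. Qed.

Lemma ipZl a x z : ip (a *: x) z = a * ip x z.
Proof. by case: ipP => lin _ _ _; rewrite -[_ *: x]addr0 lin ip0l addr0. Qed.

Lemma ipC x y : ip y x = (ip x y)^*.
Proof. by case: ipP. Qed.

Lemma ipDr x y z : ip z (x + y) = ip z x + ip z y.
Proof. by rewrite ipC ipDl rmorphD /= -!ipC. Qed.

Lemma ipZr a x z : ip z (a *: x) = a^* * ip z x.
Proof. by rewrite ipC ipZl rmorphM /= -ipC. Qed.

Lemma ip0r z : ip z 0 = 0.
Proof. by rewrite ipC ip0l conjC0. Qed.

Lemma ip_self_ge0 x : 0 <= ip x x.
Proof. by case: ipP. Qed.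

Lemma ip_self_eq0 x : ip x x = 0 -> x = 0.
Proof. by case: ipP => _ _ _; apply. Qed.

Lemma hnorm0 : hnorm ip 0 = 0.
Proof. by rewrite /hnorm ip0l sqrtr0. Qed.

Lemma hnormN x : hnorm ip (- x) = hnorm ip x.
Proof. by rewrite /hnorm -scaleN1r ipZl ipZr rmorphN1 mulrA mulrNN mulr1 mul1r. Qed.

Lemma dense_seq_cvg (S : V -> Prop) :
    (forall x e, 0 < e -> exists y, S y /\ hnorm ip (x - y) < e) ->
  forall x, exists u, (forall n, S (u n)) /\ hconverges ip u x.
Proof.
move=> dense x.
have inv_gt0 n : 0 < (n.+1%:R : R)^-1 by rewrite invr_gt0 ltr0n.
pose u n := epsilon (inhabits 0)
  (fun y => S y /\ hnorm ip (x - y) < (n.+1%:R)^-1).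
have uP n : S (u n) /\ hnorm ip (x - u n) < (n.+1%:R)^-1.
  exact: epsilon_spec (dense x _ (inv_gt0 n)).
exists u; split=> [n|e e_gt0]; first exact: (uP n).1.
exists (Num.trunc e^-1) => n le_n; rewrite -hnormN opprB.
apply: lt_trans (uP n).2 _; rewrite invf_plt ?posrE ?ltr0n //.
by rewrite (lt_le_trans (truncnS_gt _)) // ler_nat ltnS.
Qed.

Section Operator.
Variable T : op V.
Hypothesis Tlin : is_linear_op T.

Lemma sectorial_sq_ker_sub_ker (c : R[i]) : c != 0 ->
  (forall w, dom T w -> 0 <= 'Re (c * ip (app T w) w)) -> sq_ker_sub_ker T.
Proof.
move=> c_neq0 sectorial x Dx DTx TTx0.
set q := ip (app T x) (app T x); set z := ip (app T x) x.
have q_ge0 : 0 <= q := ip_self_ge0 _.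
have qJ : q^* = q by apply/conj_Creal/ger0_real.
pose r := 'Re (c * z) + 1.
(* w = q x + b Tx with b^* = - r / c gives Re (c <Tw, w>) = - q^2 *)
have [Dw Tw] := linear_op_comb Tlin q (- r / c)^* Dx DTx.
rewrite TTx0 scaler0 addr0 in Tw.
have := sectorial _ Dw; rewrite Tw ipZl ipDr !ipZr conjCK qJ -/q -/z.
have -> : c * (q * (q * z + - r / c * q)) = q ^+ 2 * (c * z - r) by field.
have r_real : r \is Num.real by rewrite rpredD ?Creal_Re ?rpred1.
rewrite ReMl ?rpredX ?ger0_real // raddfB /= (Creal_ReP _ r_real).
rewrite /r opprD addrA subrr sub0r mulrN1 oppr_ge0 => q2_le0.
apply/ip_self_eq0/eqP; rewrite -/q -sqrf_eq0.
by rewrite eq_le q2_le0 exprn_ge0.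
Qed.

Lemma adjointP y : dom (adjoint ip T) y -> adj_rel ip T y (app (adjoint ip T) y).
Proof. exact: epsilon_spec. Qed.

Lemma ip_adjoint_self w : dom T w -> dom (adjoint ip T) w ->
  ip (app (adjoint ip T) w) w = (ip (app T w) w)^*.
Proof. by move=> Dw DAw; rewrite ipC (adjointP DAw). Qed.

Lemma ip_re_part w : dom T w -> dom (adjoint ip T) w ->
  ip (app (re_part ip T) w) w = 'Re (ip (app T w) w).
Proof. by move=> Dw DAw; rewrite ipZl ipDl ip_adjoint_self // ReE mulrC. Qed.

Lemma ip_im_part w : dom T w -> dom (adjoint ip T) w ->
  ip (app (im_part ip T) w) w = 'Im (ip (app T w) w).
Proof.
move=> Dw DAw; rewrite ipZl ipDl ipZl ip_adjoint_self // ImE complexiE.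
by rewrite invfM invCi; ring.
Qed.

Lemma pos_part_sq_ker_sub_ker :
    (forall x, dom T x -> dom (adjoint ip T) x) ->
    positive_op ip (re_part ip T) \/ positive_op ip (im_part ip T) ->
  sq_ker_sub_ker T.
Proof.
move=> Tdom [] [_ pos].
  apply: (sectorial_sq_ker_sub_ker (oner_neq0 _)) => w Dw.
  have DAw := Tdom w Dw.
  by rewrite mul1r -ip_re_part //; exact: pos w (conj Dw DAw).
apply: (sectorial_sq_ker_sub_ker (c := - 'i)); first by rewrite oppr_eq0 neq0Ci.
move=> w Dw; have DAw := Tdom w Dw.
rewrite mulNr raddfN /= ReMil opprK -ip_im_part //; exact: pos w (conj Dw DAw).
Qed.

Lemma closed_dense_zero_op : closed_op ip T -> densely_defined ip T ->
  (forall x, dom T x -> app T x = 0) -> is_zero_op T.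
Proof.
move=> closed dense T0 x.
have [u [Du u_cvg]] := dense_seq_cvg dense x.
have Tu_cvg : hconverges ip (fun n => app T (u n)) 0.
  by move=> e e_gt0; exists 0%N => n _; rewrite T0 // subr0 hnorm0.
by have [Dx <-] := closed u x 0 Du u_cvg Tu_cvg; rewrite T0.
Qed.

Lemma zero_op_in_BH : is_zero_op T -> in_BH ip T.
Proof.
move=> T0; split=> [x|]; first exact: (T0 x).1.
by exists 0 => x; rewrite (T0 x).2 hnorm0 mul0r.
Qed.

Lemma adjoint_zero_op : is_zero_op T -> is_zero_op (adjoint ip T).
Proof.
move=> T0 y.
have DAy : dom (adjoint ip T) y by exists 0 => x _; rewrite (T0 x).2 ip0l ip0r.
split=> //; apply: ip_self_eq0.
by rewrite -(adjointP DAy (T0 _).1) (T0 _).2 ip0l.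
Qed.

Lemma zero_op_normal : is_zero_op T -> normal_op ip T.
Proof.
move=> T0; have A0 := adjoint_zero_op T0.
split=> x; last by move=> _; exact: etrans (T0 _).2 (esym (A0 _).2).
split=> _; split.
- exact: (T0 x).1.
- exact: (A0 _).1.
- exact: (A0 x).1.
- exact: (T0 _).1.
Qed.

End Operator.
End InnerProduct.

Theorem theorem2p5 (R : realType) (V : lmodType R[i]) (ip : V -> V -> R[i])
  (HV : is_hilbert ip) (T : op V)
  (Tlin : is_linear_op T) (Tdense : densely_defined ip T)
  (Tclosed : closed_op ip T)
  (Tdom : forall x, dom T x -> dom (adjoint ip T) x)
  (Hpos : positive_op ip (re_part ip T) \/ positive_op ip (im_part ip T))
  (Hnil : exists n : nat,
      (forall x, dom (oppow T n) x <-> dom T x) /\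
      (forall x, dom T x -> app (oppow T n) x = 0)) :
  in_BH ip T /\ normal_op ip T /\ (forall x, dom T x /\ app T x = 0).
Proof.
have [ipP _] := HV.
have [n [domn appn]] := Hnil.
have Tpow : pow_vanishes T n by move=> x Dx; split; [exact/domn | exact: appn].
have sq0 := pos_part_sq_ker_sub_ker ipP Tlin Tdom Hpos.
have T0 : is_zero_op T.
  apply: (closed_dense_zero_op ipP Tclosed Tdense).
  exact: (pow_vanishes_eq0 Tlin sq0 Tpow).
by split; [exact: zero_op_in_BH | split; [exact: zero_op_normal |]].
Qed.
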